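(* Let $n\ge3$. For $\alpha\in[1,\sqrt2]$ the center density of $D_n^\alpha$ satisfies $\delta(\mathbb{Z}^n)\le\delta(D_n^\alpha)\le\delta(D_n)$, i.e. $2^{-n}\le\delta(D_n^\alpha)\le 2^{-n/2-1}$, with the upper bound attained at $\alpha=1$ and the lower bound at $\alpha=\sqrt2$. Moreover, $\alpha\mapsto\delta(D_n^\alpha)$ is strictly decreasing on $[1,\sqrt2]$.
   Context: Let $\mathbf{e}_1,\dots,\mathbf{e}_n$ be the standard basis of $\mathbb{R}^n$. For $n\ge3$, $1\le\alpha\le\sqrt2$ and $\overline\alpha:=\sqrt{2-\alpha^2}$, $D_n^\alpha$ is the lattice with basis $\mathbf{b}_1=\alpha\mathbf{e}_1+\overline\alpha\mathbf{e}_2$, $\mathbf{b}_2=\alpha\mathbf{e}_2+\overline\alpha\mathbf{e}_3$, $\mathbf{b}_3=\overline\alpha\mathbf{e}_1+\alpha\mathbf{e}_3$, $\mathbf{b}_4=\overline\alpha\mathbf{e}_3-\alpha\mathbf{e}_4$, and $\mathbf{b}_k=\overline\alpha\mathbf{e}_{k-1}-\alpha\mathbf{e}_k$ for $5\le k\le n$; $D_n^1=D_n=\{\mathbf{x}\in\mathbb{Z}^n:\sum x_i\equiv0\pmod 2\}$ up to congruence and $D_n^{\sqrt2}=\sqrt2\mathbb{Z}^n$. Center density: $\delta(\Lambda)=\lambda_1(\Lambda)^n/(2^n\operatorname{vol}(\Lambda))$. *)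

From HB Require Import structures.
From mathcomp Require Import all_boot all_order all_algebra.
From mathcomp Require Import all_classical all_reals all_analysis.
Set Implicit Arguments. Unset Strict Implicit. Unset Printing Implicit Defensive.
Import Order.TTheory GRing.Theory Num.Theory.
Local Open Scope classical_set_scope.
Local Open Scope ring_scope.

(* Lattices in R^n are given by a basis matrix B whose ROWS are the basis
   vectors; lattice points are the integer combinations z *m B. *)
Section Lat.
Variable R : realType.

Definition enorm (n : nat) (v : 'rV[R]_n) : R := Num.sqrt (\sum_i v 0 i ^+ 2).

Definition lattice (n : nat) (B : 'M[R]_n) : set 'rV[R]_n :=
  [set v | exists z : 'rV[int]_n, v = map_mx (fun k : int => k%:~R) z *m B].

Definition lambda1 (n : nat) (B : 'M[R]_n) : R :=
  inf [set r | exists v, lattice B v /\ v != 0 /\ r = enorm v].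

Definition center_density (n : nat) (B : 'M[R]_n) : R :=
  lambda1 B ^+ n / (2 ^+ n * `|\det B|).

Definition alphabar (a : R) : R := Num.sqrt (2 - a ^+ 2).

(* basis of D_n^alpha (0-based indices):
   row 0 = a e0 + ab e1, row 1 = a e1 + ab e2, row 2 = ab e0 + a e2,
   row k (k >= 3) = ab e_{k-1} - a e_k *)
Definition Dalpha_entry (a : R) (i j : nat) : R :=
  let ab := alphabar a in
  if i == 0%N then (if j == 0%N then a else if j == 1%N then ab else 0)
  else if i == 1%N then (if j == 1%N then a else if j == 2%N then ab else 0)
  else if i == 2%N then (if j == 0%N then ab else if j == 2%N then a else 0)
  else if j == i.-1 then ab else if j == i then - a else 0.

Definition Dalpha (n : nat) (a : R) : 'M[R]_n :=
  \matrix_(i < n, j < n) Dalpha_entry a i j.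

End Lat.

From HB Require Import structures.
From mathcomp Require Import all_boot all_order all_algebra.
From mathcomp Require Import all_classical all_reals all_analysis.
From mathcomp Require Import zify ring lra.
Set Implicit Arguments. Unset Strict Implicit. Unset Printing Implicit Defensive.
Import Order.TTheory GRing.Theory Num.Theory.
Local Open Scope ring_scope.

(* Every D_n^alpha has minimum sqrt 2. The basis vector b_1 has squared length
   alpha^2 + alphabar^2 = 2. Conversely, look at the last nonzero coefficient z_m of a
   lattice vector: its last coordinate is -alpha z_m, contributing alpha^2 z_m^2, and if
   z_m = +-1 the coordinates before it contribute at least alphabar^2, since an integer
   combination alpha x + alphabar y can only be shorter than alphabar when x and y have
   opposite signs, which cannot happen all along the chain of coordinates. The basis is
   block lower triangular with a 3x3 circulant block, so
   |det| = (alpha^3 + alphabar^3) alpha^(n-3), and the density is 1 / (2^(n/2) |det|).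
   With p = alpha + alphabar one has alpha^3 + alphabar^3 = p (6 - p^2) / 2, where p
   decreases from 2 to sqrt 2 as alpha runs over [1, sqrt 2] and p (6 - p^2) decreases
   there; so the density is strictly decreasing and the bounds are its endpoint values. *)

Definition opposed (x y : int) : Prop := (x * y < 0)%R \/ (x = 0 /\ y = 0).

Lemma opposed_cycle_absurd (u v w t : int) : `|t| = 1 ->
  opposed u w -> opposed v u -> opposed w (v + t) -> False.
Proof.
move=> t1 [uw|[u0 w0]] [vu|[v0 u0']] [wvt|[w0' vt]]; try by subst; lia.
have [w_gt0|w_lt0] : (0 < w \/ w < 0)%R by nia.
  have u_lt0 : (u < 0)%R by nia.
  have v_gt0 : (0 < v)%R by nia.
  nia.
have u_gt0 : (0 < u)%R by nia.
have v_lt0 : (v < 0)%R by nia.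
nia.
Qed.

Section LatticeNorm.
Variables (R : realType) (a b : R).
Hypotheses (b_ge0 : 0 <= b) (b_le_a : b <= a) (sqr_ab : a ^+ 2 + b ^+ 2 = 2).

(* [lra] and [nra] do not see section hypotheses; this puts them in the context. *)
Local Ltac ab_facts := have := b_ge0; have := b_le_a; have := sqr_ab.

Let a_ge1 : 1 <= a.
Proof.
ab_facts => ab2 ba b0.
have : 0 <= (a - b) * (a + b) by apply: mulr_ge0; lra.
nra.
Qed.

Lemma sqr_lincomb_ge (x y : int) : ~ opposed x y ->
  b ^+ 2 <= (a * x%:~R + b * y%:~R) ^+ 2.
Proof.
move=> not_opp; have xy_ge0 : (0 <= x * y)%R by move: not_opp; rewrite /opposed; lia.
have nz : (1 <= x ^+ 2 + y ^+ 2)%R by move: not_opp; rewrite /opposed; nia.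
ab_facts => ab2 ba b0.
set X : R := x%:~R; set Y : R := y%:~R.
have XY_nz : 1 <= X ^+ 2 + Y ^+ 2 by rewrite -!rmorphXn -rmorphD ler1z.
have abXY_ge0 : 0 <= a * b * (X * Y).
  by apply: mulr_ge0; [apply: mulr_ge0; lra | rewrite -rmorphM ler0z].
have bXaX : b ^+ 2 * X ^+ 2 <= a ^+ 2 * X ^+ 2.
  by rewrite ler_wpM2r ?sqr_ge0 // ler_sqr ?nnegrE //; lra.
nra.
Qed.

Lemma sqr_shift_ge (x y : int) : `|y| = 1 -> x != 0 -> x != y ->
  b ^+ 2 <= (- a * x%:~R + b * y%:~R) ^+ 2.
Proof.
move=> y1 x0 xy; have [same_sign|opp_sign] := ltP (- x * y) 0; last first.
  have := @sqr_lincomb_ge (- x) y; rewrite mulrNz mulrN -mulNr; apply.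
  by rewrite /opposed; lia.
ab_facts => ab2 ba b0.
set X : R := x%:~R; set Y : R := y%:~R.
have Y2 : Y ^+ 2 = 1 by rewrite -rmorphXn /=; apply/eqP; rewrite (eqr_int _ _ 1); nia.
have XY_ge0 : 0 <= X * Y by rewrite -rmorphM ler0z; nia.
have XX : 2 * (X * Y) <= X ^+ 2.
  by rewrite -[2 : R]/(2%:~R) -!rmorphM -rmorphXn ler_int; nia.
have aXX : a ^+ 2 * (2 * (X * Y)) <= a ^+ 2 * X ^+ 2 by rewrite ler_wpM2l ?sqr_ge0.
have abXY : a * b * (X * Y) <= a ^+ 2 * (X * Y) by rewrite ler_wpM2r // expr2 ler_wpM2l; lra.
have -> : (- a * X + b * Y) ^+ 2 =
    a ^+ 2 * X ^+ 2 - 2 * (a * b * (X * Y)) + b ^+ 2 * Y ^+ 2 by ring.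
rewrite Y2; lra.
Qed.

(* With [b] standing for [alphabar a], [Dcoord z k] is the k-th coordinate of the lattice
   vector with integer coefficients [z] (see [Dalpha_coord]). *)
Definition Dcoord (z : nat -> int) (k : nat) : R :=
  match k with
  | 0 => a * (z 0%N)%:~R + b * (z 2%N)%:~R
  | 1 => b * (z 0%N)%:~R + a * (z 1%N)%:~R
  | 2 => b * (z 1%N)%:~R + a * (z 2%N)%:~R + b * (z 3%N)%:~R
  | k.+3 => - a * (z k.+3)%:~R + b * (z k.+4)%:~R
  end.

Definition Dnorm2 (z : nat -> int) (m : nat) : R := \sum_(k < m) Dcoord z k ^+ 2.

Lemma Dnorm2S (z : nat -> int) m : Dnorm2 z m.+1 = Dnorm2 z m + Dcoord z m ^+ 2.
Proof. by rewrite /Dnorm2 big_ord_recr. Qed.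

Lemma Dnorm2_ge0 (z : nat -> int) m : 0 <= Dnorm2 z m.
Proof. by apply: sumr_ge0 => k _; apply: sqr_ge0. Qed.

Lemma Dnorm2_3 (z : nat -> int) :
  Dnorm2 z 3 = Dcoord z 0 ^+ 2 + Dcoord z 1 ^+ 2 + Dcoord z 2 ^+ 2.
Proof. by rewrite !Dnorm2S /Dnorm2 big_ord0 add0r. Qed.

Lemma Dcoord_tail (z : nat -> int) m :
  (3 <= m)%N -> Dcoord z m = - a * (z m)%:~R + b * (z m.+1)%:~R.
Proof. by case: m => [|[|[|m]]]. Qed.

Lemma Dnorm2_3_ge_unit (z : nat -> int) : `|z 3%N| = 1 -> b ^+ 2 <= Dnorm2 z 3.
Proof.
move=> z3.
have e1 : Dcoord z 1 = a * (z 1%N)%:~R + b * (z 0%N)%:~R by rewrite addrC.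
have e2 : Dcoord z 2 = a * (z 2%N)%:~R + b * (z 1%N + z 3%N)%:~R by rewrite intrD /=; ring.
have := sqr_ge0 (Dcoord z 0); have := sqr_ge0 (Dcoord z 1); have := sqr_ge0 (Dcoord z 2).
rewrite Dnorm2_3 e1 e2 /=.
case: (pselect (opposed (z 0%N) (z 2%N))) => [opp02 | /sqr_lincomb_ge]; last by lra.
case: (pselect (opposed (z 1%N) (z 0%N))) => [opp10 | /sqr_lincomb_ge]; last by lra.
case: (pselect (opposed (z 2%N) (z 1%N + z 3%N))) => [opp2 | /sqr_lincomb_ge]; last by lra.
by have := opposed_cycle_absurd z3 opp02 opp10 opp2.
Qed.

Lemma Dnorm2_3_ge2 (z : nat -> int) :
  z 3%N = 0 -> [|| z 0%N != 0, z 1%N != 0 | z 2%N != 0] -> 2 <= Dnorm2 z 3.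
Proof.
move=> z3 nz; ab_facts => ab2 ba b0.
pose A : int := z 0%N ^+ 2 + z 1%N ^+ 2 + z 2%N ^+ 2.
pose C : int := z 0%N * z 1%N + z 1%N * z 2%N + z 2%N * z 0%N.
have -> : Dnorm2 z 3 = (a ^+ 2 + b ^+ 2) * A%:~R + 2 * (a * b) * C%:~R.
  by rewrite Dnorm2_3 /= z3 /A /C !(rmorphD, rmorphM, rmorphXn) /=; ring.
have A_ge1 : 1 <= A%:~R :> R by rewrite ler1z /A; nia.
have AC_ge1 : 1 <= A%:~R + C%:~R :> R.
  have sum_sqr : (2 * (A + C) = A + (z 0%N + z 1%N + z 2%N) ^+ 2)%R.
    by rewrite /A /C; ring.
  have := sqr_ge0 (z 0%N + z 1%N + z 2%N).
  rewrite -rmorphD ler1z; move: A_ge1 sum_sqr; rewrite ler1z; lia.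
have ab_le1 : a * b <= 1 by have := sqr_ge0 (a - b); rewrite sqrrB; lra.
have ab_ge0 : 0 <= a * b by apply: mulr_ge0; lra.
rewrite ab2; have [C_ge0|C_lt0] := lerP 0 (C%:~R : R); nra.
Qed.

Lemma Dnorm2_ge_unit m (z : nat -> int) :
  (3 <= m)%N -> `|z m| = 1 -> b ^+ 2 <= Dnorm2 z m.
Proof.
elim: m z => // m IH z; have [m3 _ zm1|m_lt3 m3] := leqP 3 m; last first.
  have -> : m = 2%N by lia.
  exact: Dnorm2_3_ge_unit.
have := Dnorm2_ge0 z m; rewrite Dnorm2S Dcoord_tail //.
have [zm0|zm_nz] := eqVneq (z m) 0.
  rewrite zm0 mulr0 add0r exprMn -rmorphXn /=.
  have -> : (z m.+1 ^+ 2 = 1)%R by nia.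
  lra.
have [zm_eq|zm_neq] := eqVneq (z m) (z m.+1).
  have := IH z m3; rewrite zm_eq => /(_ zm1).
  have := sqr_ge0 (- a * (z m.+1)%:~R + b * (z m.+1)%:~R); lra.
have := sqr_shift_ge zm1 zm_nz zm_neq; lra.
Qed.

Lemma Dnorm2_ge2 m (z : nat -> int) :
  (3 <= m)%N -> (forall i, (m <= i)%N -> z i = 0) -> (exists2 i, (i < m)%N & z i != 0) ->
  2 <= Dnorm2 z m.
Proof.
elim: m z => // m IH z; have [m3 _|m_lt3 m3] := leqP 3 m; last first.
  have -> : m = 2%N by lia.
  move=> vanish [i i_lt3 zi_nz]; apply: Dnorm2_3_ge2; first exact: vanish.
  by case: i i_lt3 zi_nz => [|[|[|i]]] // _ ->; rewrite ?orbT.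
move=> vanish [i i_lt zi_nz]; have := Dnorm2_ge0 z m; have := a_ge1.
rewrite Dnorm2S Dcoord_tail // (vanish m.+1) // mulr0 addr0 exprMn sqrrN -rmorphXn /=.
have [zm0|[zm1|zm2]] : z m = 0 \/ `|z m| = 1 \/ (2 <= `|z m|)%R by lia.
- have /IH : forall j, (m <= j)%N -> z j = 0.
    by move=> j; rewrite leq_eqVlt => /predU1P[<-|/vanish].
  have i_ltm : (i < m)%N.
    have : i != m by apply: contraNneq zi_nz => ->; rewrite zm0.
    lia.
  move=> /(_ m3 (ex_intro2 _ _ i i_ltm zi_nz)); rewrite zm0 expr0n /=; lra.
- have := Dnorm2_ge_unit m3 zm1.
  have -> : (z m ^+ 2 = 1)%R by nia.
  have := sqr_ab; lra.
- have : 4 <= (z m ^+ 2)%:~R :> R by rewrite (ler_int _ 4); nia.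
  nra.
Qed.

End LatticeNorm.

Definition zext n (z : 'rV[int]_n) (i : nat) : int :=
  if insub i is Some j then z 0 j else 0.

Lemma zext_ord n (z : 'rV[int]_n) (i : 'I_n) : zext z i = z 0 i.
Proof. by rewrite /zext valK. Qed.

Lemma zext_out n (z : 'rV[int]_n) (i : nat) : (n <= i)%N -> zext z i = 0.
Proof. by move=> ni; rewrite /zext insubF // ltnNge ni. Qed.

Lemma sum_zext_delta (R : pzRingType) n (z : 'rV[int]_n) (e : nat) :
  \sum_(i < n) (zext z i)%:~R * (i == e :> nat)%:R = (zext z e)%:~R :> R.
Proof.
have [e_lt|e_ge] := ltnP e n.
  rewrite (bigD1 (Ordinal e_lt)) //= eqxx mulr1 big1 ?addr0 ?zext_ord //.
  by move=> i /negPf ie; rewrite -val_eqE /= in ie; rewrite ie mulr0.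
rewrite zext_out // big1 // => i _.
by rewrite ltn_eqF ?mulr0 // (leq_trans (ltn_ord i) e_ge).
Qed.

Section Coordinates.
Variable R : realType.

Lemma Dalpha_entryE (a : R) (i j : nat) : Dalpha_entry a i j =
  match j with
  | 0 => a * (i == 0%N)%:R + alphabar a * (i == 2%N)%:R
  | 1 => alphabar a * (i == 0%N)%:R + a * (i == 1%N)%:R
  | 2 => alphabar a * (i == 1%N)%:R + a * (i == 2%N)%:R + alphabar a * (i == 3%N)%:R
  | j.+3 => - a * (i == j.+3)%:R + alphabar a * (i == j.+4)%:R
  end.
Proof.
rewrite /Dalpha_entry.
case: j => [|[|[|j]]]; case: i => [|[|[|i]]] /=;
  rewrite ?mulr1 ?mulr0 ?addr0 ?add0r //; rewrite ?eqSS;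
  repeat (case: eqP => ? /=); rewrite ?mulr1 ?mulr0 ?addr0 ?add0r //; lia.
Qed.

Lemma Dalpha_coord n (a : R) (z : 'rV[int]_n) (j : 'I_n) :
  (map_mx intr z *m Dalpha n a) 0 j = Dcoord a (alphabar a) (zext z) j.
Proof.
rewrite !mxE; under eq_bigr => i _ do rewrite !mxE Dalpha_entryE -zext_ord.
by case: j => -[|[|[|j]]] _ /=;
  under eq_bigr do rewrite !mulrDr ![(zext z _)%:~R * (_ * _)]mulrCA;
  rewrite !big_split -!mulr_sumr !sum_zext_delta.
Qed.

Lemma enorm_Dalpha n (a : R) (z : 'rV[int]_n) :
  enorm (map_mx intr z *m Dalpha n a) = Num.sqrt (Dnorm2 a (alphabar a) (zext z) n).
Proof.
by rewrite /enorm /Dnorm2; congr Num.sqrt; apply: eq_bigr => j _; rewrite Dalpha_coord.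
Qed.

End Coordinates.

Section Alphabar.
Variable R : realType.
Implicit Type a : R.

Lemma alphabar_ge0 a : 0 <= alphabar a.
Proof. exact: sqrtr_ge0. Qed.

Lemma sqr_alphabar a : a ^+ 2 <= 2 -> alphabar a ^+ 2 = 2 - a ^+ 2.
Proof. by move=> a2; rewrite sqr_sqrtr // subr_ge0. Qed.

Lemma alphabar_le a : 1 <= a -> alphabar a <= a.
Proof.
move=> a1; rewrite -[leRHS]ger0_norm -?sqrtr_sqr ?ler_wsqrtr //; last lra.
have : 1 <= a ^+ 2 by rewrite expr_ge1 //; lra.
lra.
Qed.

Lemma sqr_le2 a : 0 <= a -> a <= Num.sqrt 2 -> a ^+ 2 <= 2.
Proof. by move=> a0 a_le; rewrite -(@sqr_sqrtr _ 2) // ler_sqr ?nnegrE. Qed.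

Lemma sqr_add_alphabar a : 0 <= a -> a <= Num.sqrt 2 -> a ^+ 2 + alphabar a ^+ 2 = 2.
Proof. by move=> a0 a_le; rewrite sqr_alphabar ?sqr_le2 //; ring. Qed.

End Alphabar.

Section MinimalNorm.
Variables (R : realType) (a : R) (k : nat).
Hypotheses (a_ge1 : 1 <= a) (a_le_sqrt2 : a <= Num.sqrt 2).

Let sqr_a_alphabar := sqr_add_alphabar (le_trans ler01 a_ge1) a_le_sqrt2.

Lemma Dalpha_norm_ge (z : 'rV[int]_k.+3) : map_mx intr z *m Dalpha k.+3 a != 0 ->
  Num.sqrt 2 <= enorm (map_mx intr z *m Dalpha k.+3 a).
Proof.
move=> v_nz; rewrite enorm_Dalpha ler_sqrt ?Dnorm2_ge0 //.
apply: Dnorm2_ge2 => //; first exact: alphabar_ge0; first exact: alphabar_le.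
  by move=> i /zext_out.
have [j zj_nz] : exists j, z 0 j != 0.
  apply/existsP; apply: contraNT v_nz => /existsPn z0.
  suff -> : z = 0 by rewrite map_mx0 mul0mx.
  by apply/rowP => j; rewrite mxE; apply/eqP; rewrite -[_ == _]negbK z0.
by exists j; rewrite ?zext_ord.
Qed.

Let e0 : 'rV[int]_k.+3 := \row_j (j == 0 :> nat)%:R.

Lemma Dnorm2_e0 : Dnorm2 a (alphabar a) (zext e0) k.+3 = 2.
Proof.
have e0E i : zext e0 i = (i == 0)%:R.
  have [i_lt|i_ge] := ltnP i k.+3.
    by rewrite -[i]/(nat_of_ord (Ordinal i_lt)) zext_ord mxE.
  by rewrite zext_out // gtn_eqF // (leq_trans _ i_ge).
rewrite /Dnorm2 !big_ord_recl big1 => [|j _].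
  by rewrite /= !e0E /= !(mulr0z, mulr1z) -sqr_a_alphabar; ring.
by rewrite /= !e0E /= mulr0z !mulr0 addr0 expr0n.
Qed.

Lemma lambda1_Dalpha : lambda1 (Dalpha k.+3 a) = Num.sqrt 2.
Proof.
set v0 := map_mx intr e0 *m Dalpha k.+3 a.
have v0_norm : enorm v0 = Num.sqrt 2 by rewrite enorm_Dalpha Dnorm2_e0.
have v0_nz : v0 != 0.
  apply/eqP => v0_eq0; move: v0_norm; rewrite v0_eq0 /enorm big1 => [|j _].
    by rewrite sqrtr0 => /eqP; rewrite eq_sym gt_eqF // sqrtr_gt0.
  by rewrite mxE expr0n.
rewrite /lambda1; set S := (X in inf X = _).
have S_v0 : S (Num.sqrt 2) by exists v0; split; [exists e0|split].
have S_lb : lbound S (Num.sqrt 2) by move=> r [v [[z ->] [v_nz ->]]]; exact: Dalpha_norm_ge.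
apply/eqP; rewrite eq_le ge_inf ?lb_le_inf //; by exists (Num.sqrt 2).
Qed.

End MinimalNorm.

Lemma det_Dalpha3 (R : realType) (a : R) : \det (Dalpha 3 a) = a ^+ 3 + alphabar a ^+ 3.
Proof.
rewrite (expand_det_row _ ord0) !big_ord_recr big_ord0 /= /cofactor.
rewrite !(expand_det_row _ ord0) !big_ord_recr !big_ord0 /= /cofactor !det_mx11 !mxE /=.
rewrite /Dalpha_entry /=; ring.
Qed.

Lemma det_Dalpha (R : realType) (k : nat) (a : R) :
  \det (Dalpha k.+3 a) = (a ^+ 3 + alphabar a ^+ 3) * (- a) ^+ k.
Proof.
pose D : 'M[R]_(3 + k) := Dalpha k.+3 a.
change (\det D = (a ^+ 3 + alphabar a ^+ 3) * (- a) ^+ k).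
have D_ur : ursubmx D = 0 by apply/matrixP => i j; rewrite !mxE; case: i => -[|[|[|i]]].
have D_ul : ulsubmx D = Dalpha 3 a by apply/matrixP => i j; rewrite !mxE.
rewrite -(submxK D) D_ur det_lblock D_ul det_Dalpha3 det_trig.
  rewrite -[in RHS](card_ord k) -prodr_const; congr (_ * _); apply: eq_bigr => i _.
  by rewrite !mxE /Dalpha_entry /= eqxx; case: eqP => // /eqP; rewrite eqn_leq ltnn ?andbF.
apply/is_trig_mxP => i j ij; rewrite !mxE /Dalpha_entry /=.
by case: eqP => [?|_]; [lia | case: eqP => // ?; lia].
Qed.

Section CubeSum.
Variable R : realFieldType.

Lemma cube_sum_circle (a b : R) : a ^+ 2 + b ^+ 2 = 2 ->
  a ^+ 3 + b ^+ 3 = (a + b) * (6 - (a + b) ^+ 2) / 2.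
Proof.
move=> ab2; have -> : (a + b) ^+ 2 = 2 + 2 * (a * b) by rewrite sqrrD; lra.
have -> : a ^+ 3 + b ^+ 3 = (a + b) * (a ^+ 2 + b ^+ 2 - a * b) by ring.
by rewrite ab2; field.
Qed.

Lemma circle_sum_lt (a b c d : R) : 1 <= a -> a < c -> 0 <= b -> 0 <= d ->
  a ^+ 2 + b ^+ 2 = 2 -> c ^+ 2 + d ^+ 2 = 2 -> c + d < a + b.
Proof.
move=> a1 ac b0 d0 ab2 cd2.
have b1 : b <= 1 by nra.
have d1 : d <= 1 by nra.
have key : (c - a) * (c + a) = (b - d) * (b + d) by rewrite -!subr_sqr; lra.
nra.
Qed.

Lemma cubic_lt (p q : R) : 0 <= q -> q < p -> 2 <= q ^+ 2 ->
  p * (6 - p ^+ 2) < q * (6 - q ^+ 2).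
Proof.
move=> q0 qp q2; rewrite -subr_gt0.
have -> : q * (6 - q ^+ 2) - p * (6 - p ^+ 2) = (p - q) * (p ^+ 2 + p * q + q ^+ 2 - 6).
  by ring.
apply: mulr_gt0; first lra.
nra.
Qed.

End CubeSum.

Section Density.
Variable R : realType.
Local Notation sqrt2 := (Num.sqrt (2 : R)).

Let sqrt2_ge1 : 1 <= sqrt2.
Proof. by rewrite -{1}sqrtr1 ler_sqrt // ler1n. Qed.

Lemma cube_sum_alphabar_lt (a c : R) : 1 <= a -> a < c -> c <= sqrt2 ->
  a ^+ 3 + alphabar a ^+ 3 < c ^+ 3 + alphabar c ^+ 3.
Proof.
move=> a1 ac c_le.
have ab2 : a ^+ 2 + alphabar a ^+ 2 = 2 by apply: sqr_add_alphabar; lra.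
have cd2 : c ^+ 2 + alphabar c ^+ 2 = 2 by apply: sqr_add_alphabar; lra.
have b0 := alphabar_ge0 a; have d0 := alphabar_ge0 c.
rewrite !cube_sum_circle // ltr_pM2r // cubic_lt //.
- by apply: addr_ge0 => //; lra.
- exact: circle_sum_lt.
- have : 0 <= c * alphabar c by apply: mulr_ge0 => //; lra.
  by rewrite sqrrD; lra.
Qed.

Definition Dvol (k : nat) (a : R) : R := (a ^+ 3 + alphabar a ^+ 3) * a ^+ k.

Lemma Dvol_gt0 k (a : R) : 1 <= a -> 0 < Dvol k a.
Proof.
move=> a1; apply: mulr_gt0; last by apply: exprn_gt0; lra.
by apply: ltr_wpDr; [exact: exprn_ge0 (alphabar_ge0 a) | apply: exprn_gt0; lra].
Qed.

Lemma Dvol_lt k (a c : R) : 1 <= a -> a < c -> c <= sqrt2 -> Dvol k a < Dvol k c.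
Proof.
move=> a1 ac c_le; rewrite /Dvol.
apply: (@lt_le_trans _ _ ((c ^+ 3 + alphabar c ^+ 3) * a ^+ k)).
  by rewrite ltr_pM2r ?cube_sum_alphabar_lt //; apply: exprn_gt0; lra.
rewrite ler_pM2l; last by have := Dvol_gt0 0 (ltW (le_lt_trans a1 ac)); rewrite /Dvol mulr1.
by rewrite lerXn2r ?nnegrE //; lra.
Qed.

Lemma center_density_Dalpha k (a : R) : 1 <= a -> a <= sqrt2 ->
  center_density (Dalpha k.+3 a) = (sqrt2 ^+ k.+3 * Dvol k a)^-1.
Proof.
move=> a1 a_le; rewrite /center_density lambda1_Dalpha // det_Dalpha.
rewrite normrM normrX normrN ger0_norm ?(ger0_norm (le_trans ler01 a1)); last first.
  by have := Dvol_gt0 0 a1; rewrite /Dvol mulr1 => /ltW.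
have -> : (2 : R) ^+ k.+3 = sqrt2 ^+ k.+3 * sqrt2 ^+ k.+3.
  by rewrite -exprMn -expr2 sqr_sqrtr.
rewrite -/(Dvol k a); field.
by rewrite !gt_eqF ?exprn_gt0 ?sqrtr_gt0 ?Dvol_gt0.
Qed.

Lemma center_density_Dalpha_lt k (a c : R) : 1 <= a -> a < c -> c <= sqrt2 ->
  center_density (Dalpha k.+3 c) < center_density (Dalpha k.+3 a).
Proof.
move=> a1 ac c_le; have c1 := le_trans a1 (ltW ac).
have sqrt2n_gt0 : 0 < sqrt2 ^+ k.+3 by rewrite exprn_gt0 ?sqrtr_gt0.
have pos x : 1 <= x -> 0 < sqrt2 ^+ k.+3 * Dvol k x by move=> x1; rewrite mulr_gt0 ?Dvol_gt0.
rewrite !center_density_Dalpha //; last exact: le_trans (ltW ac) c_le.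
by rewrite ltf_pV2 ?posrE ?pos // ltr_pM2l // Dvol_lt.
Qed.

Lemma center_density_D1 k :
  center_density (Dalpha k.+3 (1 : R)) = (2 * sqrt2 ^+ k.+3)^-1.
Proof.
have Dvol1 : Dvol k 1 = 2.
  by rewrite /Dvol /alphabar !expr1n (_ : 2 - 1 = 1) ?sqrtr1 ?expr1n ?mulr1 //; lra.
by rewrite center_density_Dalpha // Dvol1 mulrC.
Qed.

Lemma center_density_Dsqrt2 k : center_density (Dalpha k.+3 sqrt2) = (2 ^+ k.+3)^-1.
Proof.
rewrite center_density_Dalpha // /Dvol /alphabar sqr_sqrtr // subrr sqrtr0.
by rewrite expr0n addr0 -exprD addnC addn3 -exprMn -expr2 sqr_sqrtr.
Qed.

Lemma powR_half_sub1 (n : nat) : (2 : R) `^ (- (n%:R / 2) - 1) = (2 * sqrt2 ^+ n)^-1.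
Proof.
rewrite -opprD powRN; congr (_^-1).
rewrite powRD; last by apply/implyP.
by rewrite powRr1 // mulrC (mulrC n%:R) powRrM powR12_sqrt // powR_mulrn.
Qed.

End Density.

Theorem mainTheorem17 (R : realType) (n : nat) (hn : (3 <= n)%N) :
  [/\ (forall a : R, 1 <= a -> a <= Num.sqrt 2 ->
         (2 ^+ n)^-1 <= center_density (Dalpha n a) /\
         center_density (Dalpha n a) <= 2 `^ (- (n%:R / 2) - 1)),
      center_density (Dalpha n (1 : R)) = 2 `^ (- (n%:R / 2) - 1),
      center_density (Dalpha n (Num.sqrt (2 : R))) = (2 ^+ n)^-1
    & forall a b : R, 1 <= a -> a < b -> b <= Num.sqrt 2 ->
         center_density (Dalpha n b) < center_density (Dalpha n a)].
Proof.
case: n hn => [|[|[|k]]] // _; rewrite powR_half_sub1 -center_density_D1.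
split=> [a a1 a_le|//||];
  [split | exact: center_density_Dsqrt2 | exact: center_density_Dalpha_lt].
- rewrite -center_density_Dsqrt2; have [->|a_ne] := eqVneq a (Num.sqrt 2); first exact: lexx.
  by apply/ltW/center_density_Dalpha_lt; rewrite // lt_neqAle a_ne.
- have [<-|a_ne] := eqVneq 1 a; first exact: lexx.
  by apply/ltW/center_density_Dalpha_lt; rewrite // lt_neqAle a_ne.
Qed.
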